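(* Let $\mathcal{A}=\{A_1,\dots,A_m\}$ be a bimodal collection of pairwise disjoint nonempty subsets of a finite abelian group $G$. For each $j$ let $H_j$ be the internal difference group of $A_j$ and let $a_j+H_j$ be the coset of $H_j$ containing $A_j$. Then $A_k\cap(a_j+H_j)=\emptyset$ for all $k\neq j$.
   Context: $G$ is written additively. The internal difference group of a subset $S\subseteq G$ is the subgroup generated by all $x-y$ with $x,y\in S$; a nonempty $S$ lies in a single coset of it. A collection $\{A_1,\dots,A_m\}$ of pairwise disjoint subsets of $G$ is bimodal if for every $i$ and every $\delta\in G\setminus\{0\}$, the number $N_i(\delta)$ of pairs $(a,b)$ with $a\in A_i$, $b\in A_j$ for some $j\neq i$, and $a-b=\delta$, satisfies $N_i(\delta)\in\{0,|A_i|\}$. *)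

From mathcomp Require Import all_boot all_algebra all_fingroup.
Import GRing.Theory.
Set Implicit Arguments.
Unset Strict Implicit.
Unset Printing Implicit Defensive.

(* G is a finite abelian group written additively: a finZmodType.
   Its canonical finGroupType structure (group law = +) lets us use <<_>>. *)

Definition diff_group (G : finZmodType) (S : {set G}) : {group G} :=
  <<[set (x - y)%R | x in S, y in S]>>%G.

Definition acoset (G : finZmodType) (a : G) (H : {set G}) : {set G} :=
  [set (a + h)%R | h in H].

Definition Ncount (G : finZmodType) (m : nat) (A : 'I_m -> {set G})
    (i : 'I_m) (delta : G) : nat :=
  #|[set p : G * G | [&& p.1 \in A i,
        [exists j : 'I_m, (j != i) && (p.2 \in A j)] &
        (p.1 - p.2)%R == delta]]|.

Definition pairwise_disjoint (G : finZmodType) (m : nat) (A : 'I_m -> {set G}) :=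
  forall i j : 'I_m, i != j -> [disjoint A i & A j].

Definition bimodal (G : finZmodType) (m : nat) (A : 'I_m -> {set G}) :=
  pairwise_disjoint A /\
  forall (i : 'I_m) (delta : G), delta != 0%R ->
    Ncount A i delta = 0 \/ Ncount A i delta = #|A i|.

(** A translate of a point b of another block by a difference y - x of two
    points of A_j stays in the other blocks: x - b is a nonzero difference
    realised once, hence by bimodality realised from every point of A_j, in
    particular from y.  So the union of the other blocks is stable under
    translation by the difference group H_j.  If it met a + H_j it would then
    contain the whole coset, hence A_j, contradicting disjointness. *)

From mathcomp Require Import all_boot all_algebra all_fingroup.
Set Implicit Arguments.
Unset Strict Implicit.
Unset Printing Implicit Defensive.

Import GRing.Theory FinRing.Theory.

Local Open Scope ring_scope.

Lemma mulg_closed_gen (gT : finGroupType) (E S : {set gT}) :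
  {in E & S, forall x s, (x * s)%g \in E} ->
  {in E & <<S>>%g, forall x g, (x * g)%g \in E}.
Proof.
move=> closedS x g xE; have stabS : (<<S>> \subset 'C[E | 'Rs])%g.
  rewrite gen_subG; apply/subsetP => s sS; apply/astab1P => /=.
  apply/eqP; rewrite eqEcard rcosetE card_rcoset leqnn andbT.
  by apply/subsetP => _ /rcosetP[y yE ->]; exact: closedS.
by move=> /(subsetP stabS)/astab1P/= <-; rewrite rcosetE mem_rcoset mulgK.
Qed.

Lemma acoset_subr (G : finZmodType) (H : {group G}) (a u v : G) :
  u \in acoset a H -> v \in acoset a H -> u - v \in H.
Proof.
move=> /imsetP[h hH ->] /imsetP[k kH ->].
by rewrite opprD addrACA subrr add0r -zmodVgE -zmodMgE groupM ?groupV.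
Qed.

Section Bimodal.

Variables (G : finZmodType) (m : nat) (A : 'I_m -> {set G}).

Definition others (j : 'I_m) : {set G} :=
  [set x | [exists i, (i != j) && (x \in A i)]].

Lemma notin_others j x : pairwise_disjoint A -> x \in A j -> x \notin others j.
Proof.
move=> disj xA; rewrite inE; apply/existsP => -[i /andP[ij xAi]].
by rewrite (disjointFr (disj i j ij) xAi) in xA.
Qed.

Lemma Ncount_partners i d :
  Ncount A i d = #|[set y in A i | y - d \in others i]|.
Proof.
have pair_inj : injective (fun y => (y, y - d)) by move=> y z [].
rewrite /Ncount -(card_imset _ pair_inj).
apply: eq_card => -[y z]; rewrite !inE /=; apply/and3P/imsetP => /=.
  case=> yA zO /eqP <-; exists y; last by rewrite subKr.
  by rewrite !inE yA subKr.
case=> w; rewrite !inE => /andP[wA wO] [-> ->].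
by rewrite wA subKr eqxx.
Qed.

Lemma Ncount_full_partner i d y :
  Ncount A i d = #|A i| -> y \in A i -> y - d \in others i.
Proof.
rewrite Ncount_partners => full yA.
have partnersE : [set y in A i | y - d \in others i] = A i.
  apply/eqP; rewrite eqEcard full leqnn andbT.
  by apply/subsetP => z /setIdP[].
by move: yA; rewrite -partnersE => /setIdP[].
Qed.

Lemma Ncount_gt0 i x b :
  x \in A i -> b \in others i -> (0 < Ncount A i (x - b)%R)%N.
Proof.
rewrite Ncount_partners => xA bO; apply/card_gt0P; exists x.
by rewrite inE xA subKr.
Qed.

Lemma bimodal_others_shift j x y b :
  bimodal A -> x \in A j -> y \in A j -> b \in others j ->
  b + (y - x) \in others j.
Proof.
move=> [disj bim] xA yA bO.
have d_neq0 : x - b != 0.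
  by rewrite subr_eq0; apply: contraTneq bO => <-; apply: notin_others.
have full : Ncount A j (x - b) = #|A j|.
  case: (bim j _ d_neq0) => // null.
  by have := Ncount_gt0 xA bO; rewrite null.
by have := Ncount_full_partner full yA; rewrite opprB addrCA addrC.
Qed.

End Bimodal.

Theorem lemma3p2 (G : finZmodType) (m : nat) (A : 'I_m -> {set G}) :
  bimodal A ->
  (forall i : 'I_m, A i != set0) ->
  forall (j k : 'I_m) (a : G),
    A j \subset acoset a (diff_group (A j)) ->
    k != j ->
    A k :&: acoset a (diff_group (A j)) = set0.
Proof.
move=> bimA neA j k a sAjH kj.
apply/eqP; rewrite -subset0; apply/subsetP => b /setIP[bAk bH].
have bO : b \in others A j by rewrite inE; apply/existsP; exists k; rewrite kj.
have closedH : {in others A j & diff_group (A j), forall x h,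
                 x + h \in others A j}.
  apply: mulg_closed_gen => x _ xO /imset2P[y z yA zA ->].
  exact: bimodal_others_shift.
case/set0Pn: (neA j) => x xA.
have := closedH _ _ bO (acoset_subr (subsetP sAjH x xA) bH).
by rewrite addrC subrK (negbTE (notin_others bimA.1 xA)).
Qed.
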